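(* Let $K$ be a ramified quadratic extension of $\mathbb{Q}_2$, $d=2m$ with $m$ odd, $m\ge3$, and $f=a_1x_1^d+\dots+a_sx_s^d$ with all $a_i\in\mathcal{O}\setminus\{0\}$. Suppose that for some level $k$, $f$ has two variables at level $k$ with the same $\pi$-coefficient, at least two variables at level $k+1$, and a variable in at least one of the levels $k+2$, $k+3$, $k+4$. Then $f$ has a nontrivial zero in $K$.
   Context: $\mathcal{O}$ is the ring of integers of $K$ and $\pi$ the uniformizer: $\pi=\sqrt{2},\sqrt{-2},\sqrt{10},\sqrt{-10},1+\sqrt{-1},1+\sqrt{-5}$ for $K=\mathbb{Q}_2(\sqrt2),\mathbb{Q}_2(\sqrt{-2}),\mathbb{Q}_2(\sqrt{10}),\mathbb{Q}_2(\sqrt{-10}),\mathbb{Q}_2(\sqrt{-1}),\mathbb{Q}_2(\sqrt{-5})$ respectively. Each unit $u$ has a unique expansion $u=c_0+c_1\pi+c_2\pi^2+\cdots$ with $c_j\in\{0,1\}$, $c_0=1$. Writing $a_i=\pi^r u$ with $u$ a unit, the variable $x_i$ is at level $r\bmod d$ (levels are residues modulo $d$), and its $\pi$-coefficient is $c_1$ of $u$. A nontrivial zero is a point of $K^s$, not all coordinates zero, where $f$ vanishes. *)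

(* The ring of integers O of a ramified quadratic extension
   K = Q_2(sqrt D) of Q_2 is Z_2[sqrt D] for the six discriminants listed in
   the paper; we realise it as the inverse limit  lim_n Z[sqrt D] / 2^n,
   i.e. as coherent sequences of elements of Z[sqrt D] (pairs (p,q) standing
   for p + q sqrt D), two sequences being equal in O iff they agree modulo
   2^n at every stage n. *)
From Stdlib Require Import ZArith Arith List.
Open Scope Z_scope.

Inductive ramQ2 : Set :=
| Q2sqrt2 | Q2sqrtm2 | Q2sqrt10 | Q2sqrtm10 | Q2sqrtm1 | Q2sqrtm5.

(* K = Q_2(sqrt (disc K)) *)
Definition disc (K : ramQ2) : Z :=
  match K with
  | Q2sqrt2 => 2 | Q2sqrtm2 => -2 | Q2sqrt10 => 10 | Q2sqrtm10 => -10
  | Q2sqrtm1 => -1 | Q2sqrtm5 => -5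
  end.

(* Elements of Z[sqrt D] : (p, q) = p + q sqrt D *)
Definition zq := (Z * Z)%type.
Definition zq_add (x y : zq) : zq := (fst x + fst y, snd x + snd y).
Definition zq_opp (x : zq) : zq := (- fst x, - snd x).
Definition zq_mul (K : ramQ2) (x y : zq) : zq :=
  (fst x * fst y + disc K * snd x * snd y, fst x * snd y + snd x * fst y).
Definition zq_red (n : nat) (x : zq) : zq :=
  (fst x mod 2 ^ Z.of_nat n, snd x mod 2 ^ Z.of_nat n).

Definition piZ (K : ramQ2) : zq :=
  match K with
  | Q2sqrtm1 | Q2sqrtm5 => (1, 1)
  | _ => (0, 1)
  end.

Definition Oseq := nat -> zq.

Definition isO (s : Oseq) : Prop :=
  forall n : nat, zq_red n (s (S n)) = zq_red n (s n).

Definition Oeq (s t : Oseq) : Prop :=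
  forall n : nat, zq_red n (s n) = zq_red n (t n).

Definition Ocst (x : zq) : Oseq := fun _ => x.
Definition Ozero : Oseq := Ocst (0, 0).
Definition Oone : Oseq := Ocst (1, 0).
Definition Opi (K : ramQ2) : Oseq := Ocst (piZ K).
Definition Oadd (s t : Oseq) : Oseq := fun n => zq_add (s n) (t n).
Definition Osub (s t : Oseq) : Oseq := fun n => zq_add (s n) (zq_opp (t n)).
Definition Omul (K : ramQ2) (s t : Oseq) : Oseq := fun n => zq_mul K (s n) (t n).
Fixpoint Opow (K : ramQ2) (s : Oseq) (e : nat) : Oseq :=
  match e with
  | O => Oone
  | S e' => Omul K s (Opow K s e')
  end.

Definition Ounit (K : ramQ2) (u : Oseq) : Prop :=
  exists v, isO v /\ Oeq (Omul K u v) Oone.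

Definition Odvd (K : ramQ2) (a b : Oseq) : Prop :=
  exists c, isO c /\ Oeq (Omul K a c) b.

(* the pi-coefficient c_1 of the unit u = 1 + c_1 pi + c_2 pi^2 + ... is c:
   u - 1 - c pi is divisible by pi^2 *)
Definition pi_coef (K : ramQ2) (u : Oseq) (c : bool) : Prop :=
  Odvd K (Opow K (Opi K) 2)
       (Osub (Osub u Oone) (if c then Opi K else Ozero)).

Definition level_coef (K : ramQ2) (d : nat) (a : Oseq) (l : nat) (c : bool)
  : Prop :=
  exists (r : nat) (u : Oseq),
    isO u /\ Ounit K u /\ Oeq a (Omul K (Opow K (Opi K) r) u) /\
    Nat.modulo r d = Nat.modulo l d /\ pi_coef K u c.

Definition at_level (K : ramQ2) (d : nat) (a : Oseq) (l : nat) : Prop :=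
  exists c, level_coef K d a l c.

Fixpoint Osum (s : nat) (F : nat -> Oseq) : Oseq :=
  match s with
  | O => Ozero
  | S s' => Oadd (Osum s' F) (F s')
  end.

Definition diag_form (K : ramQ2) (d s : nat) (a x : nat -> Oseq) : Oseq :=
  Osum s (fun i => Omul K (a i) (Opow K (x i) d)).

(* Write a_i = π^r_i u_i.  For the five given variables put x_i = π^t_i y_i, with t_i chosen
   so that the exponents r_i + d t_i become R, R, R+1, R+1, R+l, and x_i = 0 otherwise; then
   f(x) = π^R u_1 (y_1^d + b_2 y_2^d + π (b_3 y_3^d + b_4 y_4^d) + π^l b_5 y_5^d) with
   b_i = u_i / u_1, and b_2 ≡ 1 mod π^2 because u_1 and u_2 have the same π-coefficient.
   Modulo π^5 the d-th powers of 0, 1 and (1 + π)^m are 0, 1 and (1 + π)^2, and a finite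
   computation modulo 8 shows that for every choice of the b_i some y_i among these make the
   bracket vanish modulo π^5 with y_1 a unit -- or, for l = 3, with y_1 = y_2 = 0 and y_3 a
   unit, the bracket then being π (b_3 y_3^d + b_4 y_4^d + π^2 b_5 y_5^d).  The derivative of
   b y^d at a unit y has valuation v(2m) = 2 and 5 > 2 * 2, so Hensel's lemma lifts this to an
   exact zero; with O given by coherent sequences modulo 2^n the lift is an explicit Newton
   iteration. *)

From Stdlib Require Import ZArith Arith List Lia Ring Bool Setoid Morphisms.
Import ListNotations.
Open Scope Z_scope.

Definition zint (g : Z) : zq := (g, 0).
Definition zq_sub (x y : zq) : zq := zq_add x (zq_opp y).
Definition zq_eqb (x y : zq) : bool := Z.eqb (fst x) (fst y) && Z.eqb (snd x) (snd y).

Section Lemma16.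
Variable K : ramQ2.

(** * Arithmetic in Z[√D] *)

Fixpoint zq_pow (x : zq) (e : nat) : zq :=
  match e with O => (1, 0) | S e' => zq_mul K x (zq_pow x e') end.

Declare Scope zq_scope.
Delimit Scope zq_scope with zq.
Local Infix "+" := zq_add : zq_scope.
Local Infix "-" := zq_sub : zq_scope.
Local Notation "- x" := (zq_opp x) : zq_scope.
Local Infix "*" := (zq_mul K) : zq_scope.
Local Infix "^" := zq_pow : zq_scope.
Local Notation π := (piZ K).
Local Open Scope zq_scope.

Lemma zq_ring_theory : @ring_theory zq (0, 0) (1, 0) zq_add (zq_mul K) zq_sub zq_opp (@eq zq).
Proof.
  constructor; intros; repeat match goal with x : zq |- _ => destruct x end;
    unfold zq_sub, zq_add, zq_mul, zq_opp; cbn [fst snd]; f_equal; ring.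
Qed.

Lemma zint_morph : ring_morph (R := zq) (0, 0) (1, 0) zq_add (zq_mul K) zq_sub zq_opp (@eq zq)
  0%Z 1%Z Z.add Z.mul Z.sub Z.opp Z.eqb zint.
Proof.
  constructor; intros; unfold zint, zq_sub, zq_add, zq_mul, zq_opp; cbn [fst snd];
    try (f_equal; ring).
  apply Z.eqb_eq in H; subst; reflexivity.
Qed.

Ltac zint_cst t :=
  match t with
  | zint ?z => match isZcst z with true => z | _ => constr:(NotConstant) end
  | _ => constr:(NotConstant)
  end.
Add Ring zq_ring : zq_ring_theory (morphism zint_morph, constants [zint_cst]).
(* Literal pairs are typed [Z * Z] rather than [zq], and [ring] looks its structure up by the
   carrier, so the ring is registered under both names. *)
Add Ring zq_ring' : (zq_ring_theory : @ring_theory (Z * Z) _ _ _ _ _ _ _)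
  (morphism (zint_morph : ring_morph (R := Z * Z) _ _ _ _ _ _ _ _ _ _ _ _ _ _ _),
   constants [zint_cst]).

Lemma zint_mul a b : zint (a * b) = zint a * zint b.
Proof. unfold zint, zq_mul; cbn [fst snd]; f_equal; ring. Qed.

Lemma zint_mul_l g x : zint g * x = (g * fst x, g * snd x)%Z.
Proof. destruct x; unfold zint, zq_mul; cbn [fst snd]; f_equal; ring. Qed.

Lemma zq_add_0_l x : (0, 0) + x = x.
Proof. ring. Qed.

Lemma zq_pow_add x a b : x ^ (a + b) = x ^ a * x ^ b.
Proof. induction a as [|a IH]; cbn [zq_pow Nat.add]; [|rewrite IH]; ring. Qed.

Lemma zq_pow_mul_r x a b : x ^ (a * b) = (x ^ a) ^ b.
Proof.
  induction b as [|b IH]; cbn [zq_pow]; [now rewrite Nat.mul_0_r|].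
  now rewrite Nat.mul_succ_r, Nat.add_comm, zq_pow_add, IH.
Qed.

Lemma zq_pow_zero e : (0, 0) ^ S e = (0, 0).
Proof. cbn [zq_pow]. ring. Qed.

Lemma zq_pow_one e : (1, 0) ^ e = (1, 0).
Proof. induction e as [|e IH]; cbn [zq_pow]; [|rewrite IH]; ring. Qed.

Definition cong (g : Z) (x y : zq) : Prop := exists w, x = y + zint g * w.

Lemma cong_of_eq g x y : x = y -> cong g x y.
Proof. intros ->. exists (0, 0). ring. Qed.

#[local] Instance cong_equiv g : Equivalence (cong g).
Proof.
  split.
  - intros x. exists (0, 0). ring.
  - intros x y [w ->]. exists (- w). ring.
  - intros x y z [w ->] [v ->]. exists (v + w). ring.
Qed.

#[local] Instance cong_add g : Proper (cong g ==> cong g ==> cong g) zq_add.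
Proof. intros x x' [w ->] y y' [v ->]. exists (w + v). ring. Qed.

#[local] Instance cong_opp g : Proper (cong g ==> cong g) zq_opp.
Proof. intros x x' [w ->]. exists (- w). ring. Qed.

#[local] Instance cong_sub g : Proper (cong g ==> cong g ==> cong g) zq_sub.
Proof. intros x x' Hx y y' Hy. unfold zq_sub. now rewrite Hx, Hy. Qed.

#[local] Instance cong_mul g : Proper (cong g ==> cong g ==> cong g) (zq_mul K).
Proof.
  intros x x' [w ->] y y' [v ->]. exists (w * y' + x' * v + zint g * w * v). ring.
Qed.

#[local] Instance cong_pow g : Proper (cong g ==> eq ==> cong g) zq_pow.
Proof.
  intros x x' Hx e e' <-. induction e as [|e IH]; cbn [zq_pow]; [reflexivity|].
  now apply cong_mul.
Qed.

Lemma cong_divide g h x y : (g | h)%Z -> cong h x y -> cong g x y.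
Proof. intros [q ->] [w ->]. exists (zint q * w). rewrite zint_mul. ring. Qed.

Lemma pow2_divide (n N : nat) : (n <= N)%nat -> (2 ^ Z.of_nat n | 2 ^ Z.of_nat N)%Z.
Proof.
  intros H. exists (2 ^ Z.of_nat (N - n))%Z. rewrite <- Z.pow_add_r by lia. f_equal; lia.
Qed.

Lemma red_cong n x y : zq_red n x = zq_red n y <-> cong (2 ^ Z.of_nat n) x y.
Proof.
  assert (HM : (0 < 2 ^ Z.of_nat n)%Z) by (apply Z.pow_pos_nonneg; lia).
  unfold zq_red. set (M := (2 ^ Z.of_nat n)%Z) in *.
  destruct x as [x1 x2], y as [y1 y2]; cbn [fst snd]. split.
  - intros H. injection H as H1 H2.
    exists (x1 / M - y1 / M, x2 / M - y2 / M)%Z. rewrite zint_mul_l.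
    unfold zq_add; cbn [fst snd].
    pose proof (Z.div_mod x1 M ltac:(lia)). pose proof (Z.div_mod y1 M ltac:(lia)).
    pose proof (Z.div_mod x2 M ltac:(lia)). pose proof (Z.div_mod y2 M ltac:(lia)).
    f_equal; lia.
  - intros [w Hw]. rewrite zint_mul_l in Hw. unfold zq_add in Hw; cbn [fst snd] in Hw.
    injection Hw as -> ->. f_equal; rewrite Z.mul_comm; apply Z_mod_plus_full.
Qed.

(** * The ring O of coherent sequences *)

Definition Oopp (s : Oseq) : Oseq := fun n => zq_opp (s n).

Declare Scope O_scope.
Delimit Scope O_scope with O.
Local Infix "+" := Oadd : O_scope.
Local Infix "-" := Osub : O_scope.
Local Infix "*" := (Omul K) : O_scope.
Local Infix "^" := (Opow K) : O_scope.
Local Infix "==" := Oeq (at level 70) : O_scope.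

Lemma Oeq_iff s t : Oeq s t <-> forall n, cong (2 ^ Z.of_nat n) (s n) (t n).
Proof. unfold Oeq. now setoid_rewrite red_cong. Qed.

Lemma isO_iff s : isO s <-> forall n, cong (2 ^ Z.of_nat n) (s (S n)) (s n).
Proof. unfold isO. now setoid_rewrite red_cong. Qed.

Lemma isO_le s n N : isO s -> (n <= N)%nat -> cong (2 ^ Z.of_nat n) (s N) (s n).
Proof.
  rewrite isO_iff. intros Hs HnN. induction HnN as [|N HnN IH]; [reflexivity|].
  rewrite <- IH. apply (cong_divide _ (2 ^ Z.of_nat N)); [now apply pow2_divide|apply Hs].
Qed.

Lemma Oeq_pointwise s t : (forall n, s n = t n) -> Oeq s t.
Proof. intros H n. now rewrite H. Qed.

#[local] Instance Oeq_equiv : Equivalence Oeq.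
Proof.
  split.
  - intros s n. reflexivity.
  - intros s t H n. now rewrite H.
  - intros s t u H1 H2 n. now rewrite H1.
Qed.

#[local] Instance Oadd_proper : Proper (Oeq ==> Oeq ==> Oeq) Oadd.
Proof.
  intros s s' Hs t t' Ht. apply Oeq_iff; intros n. apply cong_add; now apply Oeq_iff.
Qed.

#[local] Instance Omul_proper : Proper (Oeq ==> Oeq ==> Oeq) (Omul K).
Proof.
  intros s s' Hs t t' Ht. apply Oeq_iff; intros n. apply cong_mul; now apply Oeq_iff.
Qed.

#[local] Instance Oopp_proper : Proper (Oeq ==> Oeq) Oopp.
Proof. intros s s' Hs. apply Oeq_iff; intros n. apply cong_opp; now apply Oeq_iff. Qed.

#[local] Instance Osub_proper : Proper (Oeq ==> Oeq ==> Oeq) Osub.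
Proof.
  intros s s' Hs t t' Ht. apply Oeq_iff; intros n. apply cong_sub; now apply Oeq_iff.
Qed.

Lemma Opow_at s e n : Opow K s e n = s n ^ e.
Proof. induction e as [|e IH]; cbn [Opow zq_pow]; [reflexivity|]. unfold Omul. now rewrite IH. Qed.

#[local] Instance Opow_proper : Proper (Oeq ==> eq ==> Oeq) (Opow K).
Proof.
  intros s s' Hs e e' <-. apply Oeq_iff; intros n. rewrite !Opow_at.
  apply cong_pow; [now apply Oeq_iff|reflexivity].
Qed.

Lemma O_ring_theory : @ring_theory Oseq Ozero Oone Oadd (Omul K) Osub Oopp Oeq.
Proof.
  constructor; intros; apply Oeq_pointwise; intros n;
    unfold Oadd, Omul, Osub, Oopp, Ozero, Oone, Ocst; ring.
Qed.

Lemma O_ring_ext : ring_eq_ext Oadd (Omul K) Oopp Oeq.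
Proof. split; typeclasses eauto. Qed.

Add Ring O_ring : O_ring_theory (setoid Oeq_equiv O_ring_ext).

Lemma isO_cst x : isO (Ocst x).
Proof. intros n. reflexivity. Qed.

Lemma isO_add s t : isO s -> isO t -> isO (s + t)%O.
Proof.
  rewrite !isO_iff. intros Hs Ht n. apply cong_add; [apply Hs|apply Ht].
Qed.

Lemma isO_sub s t : isO s -> isO t -> isO (s - t)%O.
Proof. rewrite !isO_iff. intros Hs Ht n. apply cong_sub; [apply Hs|apply Ht]. Qed.

Lemma isO_mul s t : isO s -> isO t -> isO (s * t)%O.
Proof.
  rewrite !isO_iff. intros Hs Ht n. apply cong_mul; [apply Hs|apply Ht].
Qed.

Lemma isO_pow s e : isO s -> isO (s ^ e)%O.
Proof.
  intros Hs. induction e as [|e IH]; cbn [Opow]; [apply isO_cst|now apply isO_mul].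
Qed.

Lemma isO_Opi : isO (Opi K).
Proof. apply isO_cst. Qed.

#[local] Hint Resolve isO_cst isO_Opi isO_add isO_sub isO_mul isO_pow : isO.

(** * Norms and units *)

Definition zq_norm (x : zq) : Z := (fst x * fst x - disc K * snd x * snd x)%Z.
Definition odd_norm (x : zq) : Prop := Z.odd (zq_norm x) = true.

Lemma zq_norm_mul x y : zq_norm (x * y) = (zq_norm x * zq_norm y)%Z.
Proof. destruct x, y; unfold zq_norm, zq_mul; cbn [fst snd]; ring. Qed.

Lemma zq_norm_pow x e : zq_norm (x ^ e) = (zq_norm x ^ Z.of_nat e)%Z.
Proof.
  induction e as [|e IH]; cbn [zq_pow].
  - unfold zq_norm; cbn [fst snd Z.of_nat]. rewrite Z.pow_0_r. ring.
  - now rewrite zq_norm_mul, IH, Nat2Z.inj_succ, Z.pow_succ_r, Z.mul_comm by lia.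
Qed.

Lemma odd_norm_mul x y : odd_norm x -> odd_norm y -> odd_norm (x * y).
Proof. unfold odd_norm. rewrite zq_norm_mul, Z.odd_mul. now intros -> ->. Qed.

Lemma odd_norm_pow x e : odd_norm x -> odd_norm (x ^ e).
Proof.
  unfold odd_norm. rewrite zq_norm_pow. intros H.
  destruct e; [reflexivity|]. rewrite Z.odd_pow by lia. exact H.
Qed.

Lemma odd_norm_one : odd_norm (1, 0).
Proof. unfold odd_norm, zq_norm; cbn [fst snd]. now rewrite Z.mul_0_r, Z.sub_0_r. Qed.

Lemma cong_norm g x y : cong g x y -> (g | zq_norm x - zq_norm y)%Z.
Proof.
  intros [w ->]. rewrite zint_mul_l. destruct y as [y1 y2], w as [w1 w2].
  unfold zq_norm, zq_add; cbn [fst snd].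
  exists (2 * y1 * w1 + g * w1 * w1 - disc K * (2 * y2 * w2 + g * w2 * w2))%Z. ring.
Qed.

Lemma odd_of_divide2 a b : (2 | a - b)%Z -> Z.odd a = Z.odd b.
Proof.
  intros [q Hq]. replace a with (b + 2 * q)%Z by lia. now rewrite Z.odd_add_mul_2.
Qed.

Lemma odd_norm_cong2 x y : cong 2 x y -> odd_norm y -> odd_norm x.
Proof. unfold odd_norm. intros H <-. now apply odd_of_divide2, cong_norm. Qed.

Lemma odd_norm_sq_cong w : odd_norm w -> exists g, w * w = (1, 0) + zint 2 * g.
Proof.
  destruct w as [p q]; unfold odd_norm, zq_norm; cbn [fst snd]; intros H.
  assert (Hodd : Z.odd (p * p + disc K * q * q) = true).
  { rewrite <- H. apply odd_of_divide2. exists (disc K * q * q)%Z. ring. }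
  apply Zodd_bool_iff, Zodd_ex in Hodd as [k Hk].
  exists (k, p * q)%Z. rewrite zint_mul_l. unfold zq_mul, zq_add; cbn [fst snd]. f_equal; lia.
Qed.

Lemma Ounit_odd_norm u n : isO u -> Ounit K u -> (1 <= n)%nat -> odd_norm (u n).
Proof.
  intros Hu [v [_ Huv]] Hn.
  assert (H1 : odd_norm (u 1%nat)).
  { apply Oeq_iff with (n := 1%nat) in Huv. apply cong_norm, odd_of_divide2 in Huv.
    unfold Omul, Oone, Ocst in Huv. rewrite zq_norm_mul, Z.odd_mul, odd_norm_one in Huv.
    unfold odd_norm. destruct (Z.odd (zq_norm (u 1%nat))); easy. }
  eapply odd_norm_cong2; [|exact H1].
  apply (cong_divide _ (2 ^ Z.of_nat 1)); [reflexivity|]. now apply isO_le.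
Qed.

Lemma Ounit_inv_unit u v : isO u -> isO v -> (u * v == Oone)%O -> Ounit K v.
Proof. intros Hu _ Huv. exists u. split; [exact Hu|]. rewrite <- Huv. ring. Qed.

(** * Valuations *)

Lemma zq_norm_pi_pow r u :
  odd_norm u -> exists A, Z.odd A = true /\ zq_norm (π ^ r * u) = (2 ^ Z.of_nat r * A)%Z.
Proof.
  intros Hu.
  assert (Hpi : exists o, zq_norm π = (2 * o)%Z /\ Z.odd o = true)
    by (unfold zq_norm; destruct K;
        [exists (-1)%Z|exists 1%Z|exists (-5)%Z|exists 5%Z|exists 1%Z|exists 3%Z];
        split; reflexivity).
  destruct Hpi as [o [Ho Hoo]].
  exists (o ^ Z.of_nat r * zq_norm u)%Z. split.
  - rewrite Z.odd_mul, Hu. destruct r; [reflexivity|]. now rewrite Z.odd_pow, Hoo by lia.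
  - rewrite zq_norm_mul, zq_norm_pow, Ho, Z.pow_mul_l. ring.
Qed.

Lemma pow2_odd_not_divide (r r' : nat) A B : (r < r')%nat -> Z.odd A = true ->
  ~ (2 ^ Z.of_nat (S r) | 2 ^ Z.of_nat r * A - 2 ^ Z.of_nat r' * B)%Z.
Proof.
  intros Hr HA Hd.
  replace (2 ^ Z.of_nat r' * B)%Z with (2 ^ Z.of_nat r * (2 * (2 ^ Z.of_nat (r' - S r) * B)))%Z
    in Hd.
  2:{ replace r' with (r + (1 + (r' - S r)))%nat at 2 by lia.
      rewrite !Nat2Z.inj_add, !Z.pow_add_r by lia. change (Z.of_nat 1) with 1%Z. ring. }
  rewrite <- Z.mul_sub_distr_l, Nat2Z.inj_succ, Z.pow_succ_r, (Z.mul_comm 2) in Hd by lia.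
  apply Z.mul_divide_cancel_l, odd_of_divide2 in Hd; [|apply Z.pow_nonzero; lia].
  rewrite HA, Z.odd_mul in Hd. discriminate.
Qed.

Lemma valuation_unique n r r' u u' : (r < n)%nat -> (r' < n)%nat -> odd_norm u -> odd_norm u' ->
  cong (2 ^ Z.of_nat n) (π ^ r * u) (π ^ r' * u') -> r = r'.
Proof.
  intros Hr Hr' Hu Hu' Hc. apply cong_norm in Hc.
  destruct (zq_norm_pi_pow r u Hu) as [A [HA EA]], (zq_norm_pi_pow r' u' Hu') as [B [HB EB]].
  rewrite EA, EB in Hc.
  destruct (Nat.lt_total r r') as [H|[H|H]]; [exfalso| exact H |exfalso].
  - apply (pow2_odd_not_divide r r' A B H HA).
    eapply Z.divide_trans; [apply pow2_divide|exact Hc]. lia.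
  - apply (pow2_odd_not_divide r' r B A H HB).
    rewrite <- Z.divide_opp_r, Z.opp_sub_distr, Z.add_opp_l.
    eapply Z.divide_trans; [apply pow2_divide|exact Hc]. lia.
Qed.

Lemma Opi_pow_mul_at t X n : (Opi K ^ t * X)%O n = π ^ t * X n.
Proof. unfold Omul. now rewrite Opow_at. Qed.

Lemma Opi_pow_mul_nonzero t X : (forall n, odd_norm (X n)) -> ~ (Opi K ^ t * X == Ozero)%O.
Proof.
  intros HX H. set (n := (t + 2)%nat).
  assert (H0 : cong (2 ^ Z.of_nat n) (π ^ t * X n) (0, 0)).
  { rewrite <- Opi_pow_mul_at. now apply Oeq_iff with (n := n) in H. }
  assert (H1 : cong (2 ^ Z.of_nat n) (π ^ S t * X n) (0, 0)).
  { replace (π ^ S t * X n) with (π * (π ^ t * X n)) by (cbn [zq_pow]; ring).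
    rewrite H0. exists (0, 0). ring. }
  assert (t = S t) by (apply (valuation_unique n t (S t) (X n) (X n)); auto; [lia|lia|];
                         now rewrite H0, H1).
  lia.
Qed.

Lemma pi_exponent_unique a r u r' u' : isO u -> Ounit K u -> isO u' -> Ounit K u' ->
  (a == Opi K ^ r * u)%O -> (a == Opi K ^ r' * u')%O -> r = r'.
Proof.
  intros Hu Uu Hu' Uu' E E'. set (n := (r + r' + 1)%nat).
  apply (valuation_unique n r r' (u n) (u' n)); try lia; try (apply Ounit_odd_norm; auto; lia).
  rewrite <- !Opi_pow_mul_at. apply Oeq_iff. now rewrite <- E, <- E'.
Qed.

Lemma at_level_mod d a l l' :
  at_level K d a l -> at_level K d a l' -> Nat.modulo l d = Nat.modulo l' d.
Proof.
  intros [c [r [u [Hu [Uu [E [Hr _]]]]]]] [c' [r' [u' [Hu' [Uu' [E' [Hr' _]]]]]]].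
  rewrite <- Hr, <- Hr'. f_equal. now apply (pi_exponent_unique a r u r' u').
Qed.

(** * Congruences modulo π^5 *)

(* π^2 is twice a unit, so π^5 O = 4πO + 8O. *)
Definition cong_pi5 (x y : zq) : Prop := exists z w, x = y + zint 4 * π * z + zint 8 * w.

#[local] Instance cong_pi5_equiv : Equivalence cong_pi5.
Proof.
  split.
  - intros x. exists (0, 0), (0, 0). ring.
  - intros x y [z [w ->]]. exists (- z), (- w). ring.
  - intros x y u [z [w ->]] [z' [w' ->]]. exists (z + z'), (w + w'). ring.
Qed.

#[local] Instance cong_pi5_add : Proper (cong_pi5 ==> cong_pi5 ==> cong_pi5) zq_add.
Proof. intros x x' [z [w ->]] y y' [z' [w' ->]]. exists (z + z'), (w + w'). ring. Qed.

#[local] Instance cong_pi5_opp : Proper (cong_pi5 ==> cong_pi5) zq_opp.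
Proof. intros x x' [z [w ->]]. exists (- z), (- w). ring. Qed.

#[local] Instance cong_pi5_sub : Proper (cong_pi5 ==> cong_pi5 ==> cong_pi5) zq_sub.
Proof. intros x x' Hx y y' Hy. unfold zq_sub. now rewrite Hx, Hy. Qed.

#[local] Instance cong_pi5_mul : Proper (cong_pi5 ==> cong_pi5 ==> cong_pi5) (zq_mul K).
Proof.
  intros x x' [z [w ->]] y y' [z' [w' ->]].
  exists (z * y' + x' * z' + zint 4 * π * z * z' + zint 8 * w * z' + zint 8 * z * w'),
    (w * y' + x' * w' + zint 8 * w * w'). ring.
Qed.

#[local] Instance cong_pi5_pow : Proper (cong_pi5 ==> eq ==> cong_pi5) zq_pow.
Proof.
  intros x x' Hx e e' <-. induction e as [|e IH]; cbn [zq_pow]; [reflexivity|].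
  now apply cong_pi5_mul.
Qed.

Lemma cong_pi5_of_eq x y : x = y -> cong_pi5 x y.
Proof. intros ->. reflexivity. Qed.

Lemma cong_pi5_of_sub x y : cong_pi5 (x - y) (0, 0) -> cong_pi5 x y.
Proof.
  intros H. transitivity (x - y + y); [apply cong_pi5_of_eq; ring|].
  rewrite H. apply cong_pi5_of_eq. ring.
Qed.

Lemma cong_pi5_of_cong8 x y : cong 8 x y -> cong_pi5 x y.
Proof. intros [w ->]. exists (0, 0), w. ring. Qed.

Lemma red8_cong8 x : cong 8 x (zq_red 3 x).
Proof.
  apply (red_cong 3). unfold zq_red; cbn [fst snd]. change (2 ^ Z.of_nat 3)%Z with 8%Z.
  now rewrite !Z.mod_mod by lia.
Qed.

Lemma zq_eqb_eq x y : zq_eqb x y = true -> x = y.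
Proof.
  destruct x, y; unfold zq_eqb; cbn [fst snd]. rewrite andb_true_iff, !Z.eqb_eq.
  now intros [-> ->].
Qed.

(* π^5 O / 8O = {0, 4π}: a coset of π^5 O has two residues modulo 8. *)
Definition pi5_coset8 (x : zq) : list zq := [zq_red 3 x; zq_red 3 (x + zint 4 * π)].
Definition in_pi5b (x : zq) : bool := existsb (zq_eqb (zq_red 3 x)) (pi5_coset8 (0, 0)).

Lemma pi5_coset8_sound x y : In (zq_red 3 y) (pi5_coset8 x) -> cong_pi5 y x.
Proof.
  intros H. symmetry.
  destruct H as [H|[H|[]]]; apply red_cong in H; change (2 ^ Z.of_nat 3)%Z with 8%Z in H;
    destruct H as [w Hw].
  - exists (0, 0), w. rewrite Hw. ring.
  - exists (- (1, 0)), w. transitivity (x + zint 4 * π - zint 4 * π); [ring|]. rewrite Hw. ring.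
Qed.

Lemma in_pi5b_sound x : in_pi5b x = true -> cong_pi5 x (0, 0).
Proof.
  unfold in_pi5b. intros H. apply existsb_exists in H as [r [Hr Heq]].
  apply zq_eqb_eq in Heq. subst r. now apply pi5_coset8_sound.
Qed.

(** * Classes of [2m]-th powers modulo π^5 *)

Definition unit_power_classes : list zq := [(1, 0); ((1, 0) + π) ^ 2].
Definition power_classes : list zq := (0, 0) :: unit_power_classes.

Lemma one_plus_pi_pow4 : cong_pi5 (((1, 0) + π) ^ 4) (1, 0).
Proof.
  apply cong_pi5_of_sub, in_pi5b_sound. unfold in_pi5b, pi5_coset8, zq_pow.
  destruct K; reflexivity.
Qed.

Lemma odd_norm_one_plus_pi : odd_norm ((1, 0) + π).
Proof. unfold odd_norm, zq_norm. destruct K; reflexivity. Qed.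

Lemma one_plus_pi_pow_pow m :
  Nat.odd m = true -> cong_pi5 ((((1, 0) + π) ^ m) ^ (2 * m)) (((1, 0) + π) ^ 2).
Proof.
  intros Hm. apply Nat.odd_spec in Hm as [j ->].
  rewrite <- zq_pow_mul_r.
  replace ((2 * j + 1) * (2 * (2 * j + 1)))%nat with (2 + 4 * (2 * (j * j + j)))%nat by lia.
  rewrite zq_pow_add, zq_pow_mul_r, one_plus_pi_pow4, zq_pow_one. apply cong_pi5_of_eq. ring.
Qed.

Lemma unit_power_class_root m c : Nat.odd m = true -> In c (unit_power_classes) ->
  exists y, odd_norm y /\ cong_pi5 (y ^ (2 * m)) c.
Proof.
  intros Hm [<-|[<-|[]]].
  - exists (1, 0). split; [apply odd_norm_one|]. now rewrite zq_pow_one.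
  - exists (((1, 0) + π) ^ m). split; [apply odd_norm_pow, odd_norm_one_plus_pi|].
    now apply one_plus_pi_pow_pow.
Qed.

Lemma power_class_root m c : Nat.odd m = true -> In c (power_classes) ->
  exists y, cong_pi5 (y ^ (2 * m)) c.
Proof.
  intros Hm [<-|Hc].
  - exists (0, 0). destruct m; [discriminate|].
    now replace (2 * S m)%nat with (S (2 * m + 1)) by lia; rewrite zq_pow_zero.
  - destruct (unit_power_class_root m c Hm Hc) as [y [_ Hy]]. now exists y.
Qed.

(** * Hensel lifting *)

Lemma pow_taylor x h e :
  exists R, (x + h) ^ S e = x ^ S e + zint (Z.of_nat (S e)) * x ^ e * h + h * h * R.
Proof.
  induction e as [|e [R IH]].
  - exists (0, 0). cbn [zq_pow]. change (Z.of_nat 1) with 1%Z. ring.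
  - exists (zint (Z.of_nat (S e)) * x ^ e + (x + h) * R).
    change ((x + h) ^ S (S e)) with ((x + h) * (x + h) ^ S e). rewrite IH.
    cbn [zq_pow]. rewrite (Nat2Z.inj_succ (S e)). unfold Z.succ.
    replace (zint (Z.of_nat (S e) + 1)) with (zint (Z.of_nat (S e)) + (1, 0))
      by (unfold zint, zq_add; cbn [fst snd]; f_equal).
    ring.
Qed.

(* Half the derivative of [c * x ^ (2 * m)].  Its square is 1 modulo 2, so the Newton steps
   multiply by it instead of dividing by it. *)
Definition newton_weight (m : nat) (c x : zq) : zq := c * zint (Z.of_nat m) * x ^ (2 * m - 1).

Lemma odd_norm_zint_nat m : Nat.odd m = true -> odd_norm (zint (Z.of_nat m)).
Proof.
  intros Hm. apply Nat.odd_spec in Hm as [j ->].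
  unfold odd_norm, zq_norm, zint; cbn [fst snd].
  rewrite Z.mul_0_r, Z.sub_0_r, Z.odd_mul, andb_diag, Nat2Z.inj_add, Nat2Z.inj_mul.
  now rewrite Z.add_comm, Z.odd_add_mul_2.
Qed.

Lemma odd_norm_newton_weight m c x : Nat.odd m = true -> odd_norm c -> odd_norm x ->
  odd_norm (newton_weight m c x).
Proof.
  intros Hm Hc Hx. unfold newton_weight.
  repeat apply odd_norm_mul; auto using odd_norm_zint_nat, odd_norm_pow.
Qed.

Lemma pow_taylor_even m x h : (1 <= m)%nat ->
  exists R, (x + h) ^ (2 * m) =
    x ^ (2 * m) + zint 2 * zint (Z.of_nat m) * x ^ (2 * m - 1) * h + h * h * R.
Proof.
  intros Hm. destruct (pow_taylor x h (2 * m - 1)) as [R HR]. exists R.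
  replace (2 * m)%nat with (S (2 * m - 1)) by lia. rewrite HR.
  replace (S (2 * m - 1)) with (2 * m)%nat by lia. rewrite Nat2Z.inj_mul, zint_mul. ring.
Qed.

Lemma newton_correction (M : Z) m c T x w : (4 | M)%Z -> Nat.odd m = true ->
  odd_norm c -> odd_norm x -> c * x ^ (2 * m) + T = zint (2 * M) * w ->
  cong (4 * M) (c * (x - zint M * (w * newton_weight m c x)) ^ (2 * m) + T) (0, 0).
Proof.
  intros [q ->] Hm Hc Hx HF.
  destruct (odd_norm_sq_cong _ (odd_norm_newton_weight m c x Hm Hc Hx)) as [g Hg].
  destruct m as [|m']; [discriminate|].
  destruct (pow_taylor_even (S m') x (- (zint (q * 4) * (w * newton_weight (S m') c x))) ltac:(lia))
    as [R HR].
  unfold zq_sub. rewrite HR.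
  set (W := newton_weight (S m') c x) in *.
  exists (- (w * g) + zint q * (c * w * w * W * W * R)).
  transitivity (c * x ^ (2 * S m') + T - zint (q * 8) * w * (W * W)
                + zint (q * 4 * (q * 4)) * (c * w * w * W * W * R)).
  { unfold W, newton_weight. rewrite !zint_mul. ring. }
  rewrite HF, Hg, !zint_mul. ring.
Qed.

Lemma pi_sq : exists eta, π * π = zint 2 * eta.
Proof.
  destruct K;
    [exists (1, 0)|exists (-1, 0)|exists (5, 0)|exists (-5, 0)|exists (0, 1)|exists (-2, 1)];
    reflexivity.
Qed.

Lemma hensel_start_correction m c T x z w : Nat.odd m = true -> odd_norm c -> odd_norm x ->
  c * x ^ (2 * m) + T = zint 4 * π * z + zint 8 * w ->
  cong 8 (c * (x - zint 2 * π * (z * newton_weight m c x)) ^ (2 * m) + T) (0, 0).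
Proof.
  intros Hm Hc Hx HF.
  destruct (odd_norm_sq_cong _ (odd_norm_newton_weight m c x Hm Hc Hx)) as [g Hg].
  destruct pi_sq as [eta Heta].
  destruct m as [|m']; [discriminate|].
  destruct (pow_taylor_even (S m') x (- (zint 2 * π * (z * newton_weight (S m') c x))) ltac:(lia))
    as [R HR].
  unfold zq_sub. rewrite HR.
  set (W := newton_weight (S m') c x) in *.
  exists (- (π * z * g) + w + eta * (c * z * z * W * W * R)).
  transitivity (c * x ^ (2 * S m') + T - zint 4 * π * z * (W * W)
                + zint 4 * (π * π) * (c * z * z * W * W * R)).
  { unfold W, newton_weight. ring. }
  rewrite HF, Hg, Heta. ring.
Qed.

Definition zq_div (g : Z) (y : zq) : zq := (fst y / g, snd y / g)%Z.

Lemma zq_div_exact g w : g <> 0%Z -> zq_div g (zint g * w) = w.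
Proof.
  intros Hg. rewrite zint_mul_l. destruct w as [w1 w2]. unfold zq_div; cbn [fst snd].
  now rewrite !(Z.mul_comm g), !Z.div_mul.
Qed.

Definition newton_step (m : nat) (c T : zq) (n : nat) (x : zq) : zq :=
  x - zint (2 ^ Z.of_nat (n - 1))
      * (zq_div (2 ^ Z.of_nat n) (c * x ^ (2 * m) + T) * newton_weight m c x).

Lemma newton_step_spec m c T n x : Nat.odd m = true -> (3 <= n)%nat -> odd_norm c -> odd_norm x ->
  cong (2 ^ Z.of_nat n) (c * x ^ (2 * m) + T) (0, 0) ->
  cong (2 ^ Z.of_nat (S n)) (c * newton_step m c T n x ^ (2 * m) + T) (0, 0) /\
  cong (2 ^ Z.of_nat (n - 1)) (newton_step m c T n x) x.
Proof.
  intros Hm Hn Hc Hx [w Hw].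
  rewrite zq_add_0_l in Hw.
  assert (Hdiv : zq_div (2 ^ Z.of_nat n) (c * x ^ (2 * m) + T) = w)
    by (rewrite Hw; apply zq_div_exact, Z.pow_nonzero; lia).
  unfold newton_step. rewrite Hdiv. set (M := (2 ^ Z.of_nat (n - 1))%Z).
  assert (E : forall j, (2 ^ Z.of_nat (n - 1 + j) = 2 ^ Z.of_nat j * M)%Z)
    by (intros j; unfold M; rewrite Nat2Z.inj_add, Z.pow_add_r by lia; ring).
  split.
  - replace (S n) with (n - 1 + 2)%nat by lia. rewrite E.
    apply newton_correction; auto.
    + apply (pow2_divide 2 (n - 1)). lia.
    + rewrite Hw. replace n with (n - 1 + 1)%nat at 1 by lia. now rewrite E.
  - exists (- (w * newton_weight m c x)). ring.
Qed.

Fixpoint newton_iter (m : nat) (c T : Oseq) (x0 : zq) (j : nat) : zq :=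
  match j with
  | O => x0
  | S j' => newton_step m (c (j' + 4)%nat) (T (j' + 4)%nat) (j' + 3) (newton_iter m c T x0 j')
  end.

Section Newton.
Variables (m : nat) (c T : Oseq) (x0 : zq).
Hypotheses (Hm : Nat.odd m = true) (Hc : isO c) (Hc_odd : forall n, (1 <= n)%nat -> odd_norm (c n))
  (HT : isO T) (Hx0 : odd_norm x0) (Hroot : cong 8 (c 3%nat * x0 ^ (2 * m) + T 3%nat) (0, 0)).

Lemma equation_stage_cong y n N : (n <= N)%nat ->
  cong (2 ^ Z.of_nat n) (c N * y ^ (2 * m) + T N) (c n * y ^ (2 * m) + T n).
Proof. intros HnN. now rewrite (isO_le c n N), (isO_le T n N). Qed.

Lemma newton_iter_spec j :
  odd_norm (newton_iter m c T x0 j) /\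
  cong (2 ^ Z.of_nat (j + 3))
    (c (j + 3)%nat * newton_iter m c T x0 j ^ (2 * m) + T (j + 3)%nat) (0, 0).
Proof.
  induction j as [|j [IHodd IHroot]]; [split; assumption|].
  assert (Hj : cong (2 ^ Z.of_nat (j + 3))
      (c (j + 4)%nat * newton_iter m c T x0 j ^ (2 * m) + T (j + 4)%nat) (0, 0))
    by (rewrite (equation_stage_cong _ (j + 3) (j + 4)) by lia; exact IHroot).
  destruct (newton_step_spec m _ _ (j + 3) _ Hm ltac:(lia) (Hc_odd (j + 4) ltac:(lia)) IHodd Hj)
    as [Hroot' Hclose].
  cbn [newton_iter]. split.
  - eapply odd_norm_cong2; [|exact IHodd].
    apply (cong_divide _ (2 ^ Z.of_nat (j + 3 - 1))); [apply (pow2_divide 1); lia|exact Hclose].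
  - replace (S (j + 3)) with (j + 4)%nat in Hroot' by lia.
    now replace (S j + 3)%nat with (j + 4)%nat by lia.
Qed.

Lemma newton_iter_succ j :
  cong (2 ^ Z.of_nat (j + 2)) (newton_iter m c T x0 (S j)) (newton_iter m c T x0 j).
Proof.
  destruct (newton_iter_spec j) as [Hodd Hj].
  rewrite <- (equation_stage_cong _ (j + 3) (j + 4)) in Hj by lia.
  destruct (newton_step_spec m _ _ (j + 3) _ Hm ltac:(lia) (Hc_odd (j + 4) ltac:(lia)) Hodd Hj)
    as [_ Hclose].
  now replace (j + 2)%nat with (j + 3 - 1)%nat by lia.
Qed.

End Newton.

Lemma hensel_lift m c T x0 : Nat.odd m = true -> isO c -> Ounit K c -> isO T -> odd_norm x0 ->
  cong_pi5 (c 3%nat * x0 ^ (2 * m) + T 3%nat) (0, 0) ->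
  exists X, isO X /\ (forall n, odd_norm (X n)) /\ (c * X ^ (2 * m) + T == Ozero)%O.
Proof.
  intros Hm Hc Uc HT Hx0 [z [w Hzw]].
  assert (Hc_odd : forall n, (1 <= n)%nat -> odd_norm (c n)) by (intros; now apply Ounit_odd_norm).
  set (x1 := x0 - zint 2 * π * (z * newton_weight m (c 3%nat) x0)).
  assert (Hx1 : odd_norm x1).
  { eapply odd_norm_cong2; [|exact Hx0]. exists (- (π * (z * newton_weight m (c 3%nat) x0))).
    unfold x1. ring. }
  assert (Hroot : cong 8 (c 3%nat * x1 ^ (2 * m) + T 3%nat) (0, 0)).
  { apply (hensel_start_correction m _ _ x0 z w); auto. }
  exists (fun n => newton_iter m c T x1 (n - 2)). split; [|split].
  - apply isO_iff; intros n. destruct (Nat.le_gt_cases n 1) as [Hn|Hn].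
    + now replace (S n - 2)%nat with (n - 2)%nat by lia.
    + replace (S n - 2)%nat with (S (n - 2)) by lia.
      replace n with (n - 2 + 2)%nat at 1 by lia. now apply newton_iter_succ.
  - intros n. now apply newton_iter_spec.
  - apply Oeq_iff; intros n. unfold Oadd, Omul. rewrite Opow_at.
    destruct (newton_iter_spec m c T x1 Hm Hc Hc_odd HT Hx1 Hroot (n - 2)) as [_ Hn].
    rewrite <- (equation_stage_cong m c T Hc HT _ n (n - 2 + 3)) by lia.
    apply (cong_divide _ (2 ^ Z.of_nat (n - 2 + 3))); [apply pow2_divide; lia|exact Hn].
Qed.

(** * The finite computation *)

Definition residues8 : list zq :=
  let r := map Z.of_nat (seq 0 8) in flat_map (fun p => map (fun q => (p, q)) r) r.

(* The sums of distinct π^i, i < j: representatives of O / π^j. *)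
Fixpoint pi_digits (j : nat) : list zq :=
  match j with
  | O => [(0, 0)]
  | S j' => flat_map (fun x => [x; x + π ^ j']) (pi_digits j')
  end.
Definition unit_reps (j : nat) : list zq := filter (fun x => Z.odd (zq_norm x)) (pi_digits j).
Definition reps_one_mod2 : list zq :=
  filter (fun x => Z.odd (fst x) && Z.even (snd x)) (pi_digits 5).

Definition reps_cover : bool :=
  forallb (fun x =>
    (negb (Z.odd (fst x) && Z.even (snd x)) || existsb (fun r => in_pi5b (x - r)) reps_one_mod2) &&
    (negb (Z.odd (zq_norm x)) ||
       existsb (fun r => in_pi5b (x - r)) (unit_reps 5) &&
       existsb (fun r => in_pi5b (π ^ 2 * (x - r))) (unit_reps 3)))
  residues8.

(* [meets (tails l b3 b4 b5) (heads b2)] says that some c1 + b2 c2 + π (b3 c3 + b4 c4)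
   + π^l b5 c5 with c1 a unit class and c2, ..., c5 classes lies in π^5 O; comparing residues of
   the two halves avoids enumerating all combinations. *)
Definition heads (b2 : zq) : list zq :=
  flat_map (fun c1 => flat_map (fun c2 => pi5_coset8 (c1 + b2 * c2)) power_classes)
    unit_power_classes.
Definition tails (l : nat) (b3 b4 b5 : zq) : list zq :=
  let T3 := map (fun c => π * (b3 * c)) power_classes in
  let T4 := map (fun c => π * (b4 * c)) power_classes in
  let T5 := map (fun c => π ^ l * (b5 * c)) power_classes in
  flat_map (fun t3 => flat_map (fun t4 => map (fun t5 => zq_red 3 (- (t3 + t4 + t5))) T5) T4) T3.
Definition meets (R H : list zq) : bool := existsb (fun r => existsb (zq_eqb r) H) R.

Definition solvable_shifted (b3 b4 b5 : zq) : bool :=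
  existsb (fun c3 => existsb (fun c4 => existsb (fun c5 =>
    in_pi5b (b3 * c3 + b4 * c4 + π ^ 2 * (b5 * c5)))
    power_classes) power_classes) unit_power_classes.

Definition local_check : bool :=
  let Hs := map heads reps_one_mod2 in
  forallb (fun l => forallb (fun b3 => forallb (fun b4 => forallb (fun b5 =>
    let R := tails l b3 b4 b5 in
    forallb (fun H => if meets R H then true else Nat.eqb l 3 && solvable_shifted b3 b4 b5) Hs)
    (unit_reps 3)) (unit_reps 5)) (unit_reps 5)) [2; 3; 4]%nat.
(* Both checks are discharged by evaluation after the section, one field at a time. *)
Hypothesis reps_cover_ok : reps_cover = true.
Hypothesis local_check_ok : local_check = true.

Lemma red8_in_residues8 x : In (zq_red 3 x) residues8.
Proof.
  assert (Hr : forall a, In (a mod 8)%Z (map Z.of_nat (seq 0 8))).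
  { intros a. apply in_map_iff. exists (Z.to_nat (a mod 8)). split.
    - apply Z2Nat.id, Z.mod_pos_bound. lia.
    - apply in_seq. pose proof (Z.mod_pos_bound a 8). lia. }
  unfold residues8, zq_red. change (2 ^ Z.of_nat 3)%Z with 8%Z.
  apply in_flat_map. exists (fst x mod 8)%Z. split; [apply Hr|]. apply in_map, Hr.
Qed.

Lemma reps_cover_at x :
  let y := zq_red 3 x in
  (negb (Z.odd (fst y) && Z.even (snd y)) || existsb (fun r => in_pi5b (y - r)) (reps_one_mod2)) &&
  (negb (Z.odd (zq_norm y)) ||
     existsb (fun r => in_pi5b (y - r)) (unit_reps 5) &&
     existsb (fun r => in_pi5b (π ^ 2 * (y - r))) (unit_reps 3)) = true.
Proof.
  pose proof (reps_cover_ok) as H. unfold reps_cover in H.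
  rewrite forallb_forall in H. apply H, red8_in_residues8.
Qed.

Lemma cong_pi5_red8 x : cong_pi5 (zq_red 3 x) x.
Proof. symmetry. apply cong_pi5_of_cong8, red8_cong8. Qed.

Lemma cong2_red8 x : cong 2 (zq_red 3 x) x.
Proof. symmetry. apply (cong_divide 2 8); [exists 4%Z; reflexivity|apply red8_cong8]. Qed.

Lemma odd_even_of_cong2 y : cong 2 y (1, 0) -> Z.odd (fst y) && Z.even (snd y) = true.
Proof.
  intros [w ->]. rewrite zint_mul_l. unfold zq_add; cbn [fst snd].
  now rewrite Z.odd_add_mul_2, Z.add_0_l, Z.even_mul.
Qed.

Lemma rep_one_mod2 x : cong 2 x (1, 0) -> exists r, In r (reps_one_mod2) /\ cong_pi5 x r.
Proof.
  intros Hx. pose proof (reps_cover_at x) as H. cbv zeta in H.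
  rewrite odd_even_of_cong2 in H by now rewrite cong2_red8.
  apply andb_prop in H as [H _]. apply existsb_exists in H as [r [Hr H]].
  exists r. split; [exact Hr|]. apply in_pi5b_sound, cong_pi5_of_sub in H.
  now rewrite <- H, cong_pi5_red8.
Qed.

Lemma rep_unit x : odd_norm x ->
  (exists r, In r (unit_reps 5) /\ cong_pi5 x r) /\
  (exists r, In r (unit_reps 3) /\ cong_pi5 (π ^ 2 * x) (π ^ 2 * r)).
Proof.
  intros Hx. pose proof (reps_cover_at x) as H. cbv zeta in H.
  replace (Z.odd (zq_norm (zq_red 3 x))) with true in H
    by (symmetry; eapply odd_norm_cong2; [apply cong2_red8|exact Hx]).
  apply andb_prop in H as [_ H]. apply andb_prop in H as [H4 H3].
  apply existsb_exists in H4 as [r4 [Hr4 H4]], H3 as [r3 [Hr3 H3]].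
  apply in_pi5b_sound in H4, H3. split; [exists r4|exists r3]; split; auto; apply cong_pi5_of_sub.
  - now rewrite <- H4, cong_pi5_red8.
  - rewrite <- H3, cong_pi5_red8. apply cong_pi5_of_eq. ring.
Qed.

Lemma meets_sound m l r2 r3 r4 r5 : Nat.odd m = true ->
  meets (tails l r3 r4 r5) (heads r2) = true ->
  exists y1 y2 y3 y4 y5, odd_norm y1 /\
    cong_pi5 (y1 ^ (2 * m) + r2 * y2 ^ (2 * m)
              + (π * (r3 * y3 ^ (2 * m)) + π * (r4 * y4 ^ (2 * m)) + π ^ l * (r5 * y5 ^ (2 * m))))
      (0, 0).
Proof.
  intros Hm H. apply existsb_exists in H as [t [Ht H]].
  apply existsb_exists in H as [h [Hh Hth]]. apply zq_eqb_eq in Hth. subst h.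
  unfold tails in Ht. apply in_flat_map in Ht as [t3 [Ht3 Ht]].
  apply in_flat_map in Ht as [t4 [Ht4 Ht]]. apply in_map_iff in Ht as [t5 [<- Ht5]].
  apply in_map_iff in Ht3 as [c3 [<- Hc3]], Ht4 as [c4 [<- Hc4]], Ht5 as [c5 [<- Hc5]].
  unfold heads in Hh. apply in_flat_map in Hh as [c1 [Hc1 Hh]].
  apply in_flat_map in Hh as [c2 [Hc2 Hh]]. apply pi5_coset8_sound in Hh.
  destruct (unit_power_class_root m c1 Hm Hc1) as [y1 [Hy1 E1]].
  destruct (power_class_root m c2 Hm Hc2) as [y2 E2], (power_class_root m c3 Hm Hc3) as [y3 E3],
    (power_class_root m c4 Hm Hc4) as [y4 E4], (power_class_root m c5 Hm Hc5) as [y5 E5].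
  exists y1, y2, y3, y4, y5. split; [exact Hy1|].
  rewrite E1, E2, E3, E4, E5, <- Hh. apply cong_pi5_of_eq. ring.
Qed.

Lemma solvable_shifted_sound m r3 r4 r5 : Nat.odd m = true -> solvable_shifted r3 r4 r5 = true ->
  exists y3 y4 y5, odd_norm y3 /\
    cong_pi5 (r3 * y3 ^ (2 * m) + (r4 * y4 ^ (2 * m) + π ^ 2 * (r5 * y5 ^ (2 * m)))) (0, 0).
Proof.
  intros Hm H. apply existsb_exists in H as [c3 [Hc3 H]].
  apply existsb_exists in H as [c4 [Hc4 H]]. apply existsb_exists in H as [c5 [Hc5 H]].
  apply in_pi5b_sound in H.
  destruct (unit_power_class_root m c3 Hm Hc3) as [y3 [Hy3 E3]].
  destruct (power_class_root m c4 Hm Hc4) as [y4 E4], (power_class_root m c5 Hm Hc5) as [y5 E5].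
  exists y3, y4, y5. split; [exact Hy3|].
  rewrite E3, E4, E5, <- H. apply cong_pi5_of_eq. ring.
Qed.

Lemma cong_pi5_pi_pow_mul l x y z : (2 <= l)%nat -> cong_pi5 (π ^ 2 * x) (π ^ 2 * y) ->
  cong_pi5 (π ^ l * (x * z)) (π ^ l * (y * z)).
Proof.
  intros Hl H. replace l with (l - 2 + 2)%nat by lia. rewrite zq_pow_add.
  replace (π ^ (l - 2) * π ^ 2 * (x * z)) with (π ^ (l - 2) * (π ^ 2 * x) * z) by ring.
  rewrite H. apply cong_pi5_of_eq. ring.
Qed.

Lemma local_solution m l b1 b2 b3 b4 b5 : Nat.odd m = true -> (2 <= l <= 4)%nat ->
  cong_pi5 b1 (1, 0) -> cong 2 b2 (1, 0) -> odd_norm b3 -> odd_norm b4 -> odd_norm b5 ->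
  (exists y1 y2 y3 y4 y5, odd_norm y1 /\
     cong_pi5 (b1 * y1 ^ (2 * m) + (b2 * y2 ^ (2 * m) + π * (b3 * y3 ^ (2 * m) + b4 * y4 ^ (2 * m))
            + π ^ l * (b5 * y5 ^ (2 * m)))) (0, 0)) \/
  (l = 3%nat /\ exists y3 y4 y5, odd_norm y3 /\
     cong_pi5 (b3 * y3 ^ (2 * m) + (b4 * y4 ^ (2 * m) + π ^ 2 * (b5 * y5 ^ (2 * m)))) (0, 0)).
Proof.
  intros Hm Hl E1 Hb2 Hb3 Hb4 Hb5.
  destruct (rep_one_mod2 b2 Hb2) as [r2 [Hr2 E2]].
  destruct (rep_unit b3 Hb3) as [[r3 [Hr3 E3]] _].
  destruct (rep_unit b4 Hb4) as [[r4 [Hr4 E4]] _].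
  destruct (rep_unit b5 Hb5) as [_ [r5 [Hr5 E5]]].
  pose proof (local_check_ok) as H. unfold local_check in H. cbv zeta in H.
  rewrite forallb_forall in H. specialize (H l ltac:(simpl; lia)).
  rewrite forallb_forall in H. specialize (H r3 Hr3).
  rewrite forallb_forall in H. specialize (H r4 Hr4).
  rewrite forallb_forall in H. specialize (H r5 Hr5).
  rewrite forallb_forall in H. specialize (H (heads r2) (in_map _ _ _ Hr2)).
  destruct (meets (tails l r3 r4 r5) (heads r2)) eqn:HA.
  - left. destruct (meets_sound m l r2 r3 r4 r5 Hm HA) as (y1 & y2 & y3 & y4 & y5 & Hy1 & Hy).
    exists y1, y2, y3, y4, y5. split; [exact Hy1|]. rewrite <- Hy.
    rewrite (cong_pi5_pi_pow_mul l b5 r5 _ ltac:(lia) E5).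
    rewrite E1, E2, E3, E4. apply cong_pi5_of_eq. ring.
  - right. apply andb_prop in H as [Hl3 HB]. apply Nat.eqb_eq in Hl3. subst l.
    split; [reflexivity|].
    destruct (solvable_shifted_sound m r3 r4 r5 Hm HB) as (y3 & y4 & y5 & Hy3 & Hy).
    exists y3, y4, y5. split; [exact Hy3|]. rewrite <- Hy.
    rewrite (cong_pi5_pi_pow_mul 2 b5 r5 _ ltac:(lia) E5).
    now rewrite E3, E4.
Qed.

(** * Solving the normal form *)

(* The bracket of the header, with coefficients b_i and variables Y_i in O. *)
Definition normal_form (m l : nat) (b1 b2 b3 b4 b5 Y1 Y2 Y3 Y4 Y5 : Oseq) : Oseq :=
  (b1 * Y1 ^ (2 * m) + (b2 * Y2 ^ (2 * m) + Opi K * (b3 * Y3 ^ (2 * m) + b4 * Y4 ^ (2 * m))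
   + Opi K ^ l * (b5 * Y5 ^ (2 * m))))%O.

Lemma normal_form_scale m l v b1 b2 b3 b4 b5 Y1 Y2 Y3 Y4 Y5 :
  (normal_form m l (v * b1) (v * b2) (v * b3) (v * b4) (v * b5) Y1 Y2 Y3 Y4 Y5
   == v * normal_form m l b1 b2 b3 b4 b5 Y1 Y2 Y3 Y4 Y5)%O.
Proof. unfold normal_form. ring. Qed.

Lemma Opow_zero e : (1 <= e)%nat -> (Ozero ^ e == Ozero)%O.
Proof. intros He. destruct e as [|e]; [lia|]. cbn [Opow]. ring. Qed.

Lemma Odvd_pi2_cong2 s n : (1 <= n)%nat -> Odvd K (Opi K ^ 2)%O s -> cong 2 (s n) (0, 0).
Proof.
  intros Hn [z [_ Hz]]. destruct pi_sq as [eta Heta].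
  apply Oeq_iff with (n := n) in Hz. rewrite Opi_pow_mul_at in Hz.
  rewrite <- (cong_divide 2 _ _ _ (pow2_divide 1 n Hn) Hz).
  exists (eta * z n). transitivity (π * π * z n); [cbn [zq_pow]; ring|]. rewrite Heta. ring.
Qed.

Definition isOunit (u : Oseq) : Prop := isO u /\ Ounit K u.

Lemma isOunit_mul u v : isOunit u -> isOunit v -> isOunit (u * v)%O.
Proof.
  intros [Hu [u' [Hu' Eu]]] [Hv [v' [Hv' Ev]]]. split; [now apply isO_mul|].
  exists (u' * v')%O. split; [now apply isO_mul|].
  transitivity ((u * u') * (v * v'))%O; [ring|]. rewrite Eu, Ev. ring.
Qed.

Lemma normal_form_root_normalized m l b1 b2 b3 b4 b5 : Nat.odd m = true -> (2 <= l <= 4)%nat ->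
  isOunit b1 -> isOunit b2 -> isOunit b3 -> isOunit b4 -> isOunit b5 ->
  cong_pi5 (b1 3%nat) (1, 0) -> cong 2 (b2 3%nat) (1, 0) ->
  exists Y1 Y2 Y3 Y4 Y5, isO Y1 /\ isO Y2 /\ isO Y3 /\ isO Y4 /\ isO Y5 /\
    ((forall n, odd_norm (Y1 n)) \/ (forall n, odd_norm (Y3 n))) /\
    (normal_form m l b1 b2 b3 b4 b5 Y1 Y2 Y3 Y4 Y5 == Ozero)%O.
Proof.
  intros Hm Hl [Hb1 Ub1] [Hb2 Ub2] [Hb3 Ub3] [Hb4 Ub4] [Hb5 Ub5] E1 E2.
  assert (Hodd : forall b, isO b -> Ounit K b -> odd_norm (b 3%nat))
    by (intros; apply Ounit_odd_norm; auto).
  destruct (local_solution m l _ _ _ _ _ Hm Hl E1 E2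
              (Hodd b3 Hb3 Ub3) (Hodd b4 Hb4 Ub4) (Hodd b5 Hb5 Ub5))
    as [(y1 & y2 & y3 & y4 & y5 & Hy1 & Hy) | (-> & y3 & y4 & y5 & Hy3 & Hy)].
  - set (T := (b2 * Ocst y2 ^ (2 * m) + Opi K * (b3 * Ocst y3 ^ (2 * m) + b4 * Ocst y4 ^ (2 * m))
               + Opi K ^ l * (b5 * Ocst y5 ^ (2 * m)))%O).
    assert (HT : isO T) by (unfold T; auto 10 with isO).
    assert (HT3 : cong_pi5 (b1 3%nat * y1 ^ (2 * m) + T 3%nat) (0, 0))
      by (unfold T, Oadd, Omul, Opi, Ocst; rewrite !Opow_at; exact Hy).
    destruct (hensel_lift m b1 T y1 Hm Hb1 Ub1 HT Hy1 HT3) as [X [HX [HXodd HXroot]]].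
    exists X, (Ocst y2), (Ocst y3), (Ocst y4), (Ocst y5).
    repeat split; try apply isO_cst; [exact HX|left; exact HXodd|exact HXroot].
  - set (T := (b4 * Ocst y4 ^ (2 * m) + Opi K ^ 2 * (b5 * Ocst y5 ^ (2 * m)))%O).
    assert (HT : isO T) by (unfold T; auto 10 with isO).
    assert (HT3 : cong_pi5 (b3 3%nat * y3 ^ (2 * m) + T 3%nat) (0, 0))
      by (unfold T, Oadd, Omul, Opi, Ocst; rewrite !Opow_at; exact Hy).
    destruct (hensel_lift m b3 T y3 Hm Hb3 Ub3 HT Hy3 HT3) as [X [HX [HXodd HXroot]]].
    exists Ozero, Ozero, X, (Ocst y4), (Ocst y5).
    repeat split; try apply isO_cst; [exact HX|right; exact HXodd|].
    unfold normal_form. rewrite Opow_zero by (destruct m; [discriminate|lia]).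
    transitivity (Opi K * (b3 * X ^ (2 * m) + T))%O; [unfold T; cbn [Opow]; ring|].
    rewrite HXroot. ring.
Qed.

Lemma normal_form_root m l u1 u2 u3 u4 u5 : Nat.odd m = true -> (2 <= l <= 4)%nat ->
  isOunit u1 -> isOunit u2 -> isOunit u3 -> isOunit u4 -> isOunit u5 ->
  Odvd K (Opi K ^ 2)%O (u2 - u1)%O ->
  exists Y1 Y2 Y3 Y4 Y5, isO Y1 /\ isO Y2 /\ isO Y3 /\ isO Y4 /\ isO Y5 /\
    ((forall n, odd_norm (Y1 n)) \/ (forall n, odd_norm (Y3 n))) /\
    (normal_form m l u1 u2 u3 u4 u5 Y1 Y2 Y3 Y4 Y5 == Ozero)%O.
Proof.
  intros Hm Hl U1 U2 U3 U4 U5 [z [Hz Ez]].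
  pose proof U1 as [Hu1 [v [Hv Huv]]].
  assert (Uv : isOunit v) by (split; [exact Hv|exact (Ounit_inv_unit u1 v Hu1 Hv Huv)]).
  assert (Hvu1 : (v * u1 == Oone)%O) by (rewrite <- Huv; ring).
  assert (E1 : cong_pi5 ((v * u1)%O 3%nat) (1, 0))
    by (apply cong_pi5_of_cong8; exact (proj1 (Oeq_iff _ _) Hvu1 3%nat)).
  assert (E2 : cong 2 ((v * u2)%O 3%nat) (1, 0)).
  { assert (D : Odvd K (Opi K ^ 2)%O (v * u2 - Oone)%O).
    { exists (v * z)%O. split; [now apply isO_mul|].
      rewrite <- Hvu1. transitivity (v * (Opi K ^ 2 * z))%O; [ring|]. rewrite Ez. ring. }
    apply (Odvd_pi2_cong2 _ 3) in D; [|lia].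
    transitivity ((v * u2 - Oone)%O 3%nat + (1, 0));
      [apply cong_of_eq; unfold Osub, Oone, Ocst; ring|].
    rewrite D. apply cong_of_eq. ring. }
  destruct (normal_form_root_normalized m l (v * u1)%O (v * u2)%O (v * u3)%O (v * u4)%O (v * u5)%O
              Hm Hl (isOunit_mul _ _ Uv U1)
              (isOunit_mul _ _ Uv U2) (isOunit_mul _ _ Uv U3) (isOunit_mul _ _ Uv U4)
              (isOunit_mul _ _ Uv U5) E1 E2)
    as (Y1 & Y2 & Y3 & Y4 & Y5 & H1 & H2 & H3 & H4 & H5 & Hodd & HY).
  exists Y1, Y2, Y3, Y4, Y5. repeat split; auto.
  rewrite normal_form_scale in HY.
  transitivity (u1 * (v * normal_form m l u1 u2 u3 u4 u5 Y1 Y2 Y3 Y4 Y5))%O.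
  - transitivity ((u1 * v) * normal_form m l u1 u2 u3 u4 u5 Y1 Y2 Y3 Y4 Y5)%O; [rewrite Huv|]; ring.
  - rewrite HY. ring.
Qed.

(** * Assembling the zero *)

Lemma Opow_add s a b : (s ^ (a + b) == s ^ a * s ^ b)%O.
Proof. induction a as [|a IH]; cbn [Opow Nat.add]; [|rewrite IH]; ring. Qed.

Lemma Opow_mul_l s t e : ((s * t) ^ e == s ^ e * t ^ e)%O.
Proof. induction e as [|e IH]; cbn [Opow]; [|rewrite IH]; ring. Qed.

Lemma Opow_mul_r s a b : (s ^ (a * b) == (s ^ a) ^ b)%O.
Proof.
  induction b as [|b IH]; cbn [Opow]; [now rewrite Nat.mul_0_r|].
  now rewrite Nat.mul_succ_r, Nat.add_comm, Opow_add, IH.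
Qed.

Lemma monomial_shift d a r u t E Y : (a == Opi K ^ r * u)%O -> (r + d * t = E)%nat ->
  (a * (Opi K ^ t * Y) ^ d == Opi K ^ E * (u * Y ^ d))%O.
Proof.
  intros Ha <-. rewrite Ha, Opow_mul_l, <- Opow_mul_r, Opow_add, (Nat.mul_comm t d). ring.
Qed.

Lemma Osum_ext s F G : (forall i, (i < s)%nat -> F i = G i) -> Osum s F = Osum s G.
Proof.
  induction s as [|s IH]; intros H; cbn [Osum]; [reflexivity|].
  rewrite IH by (intros i Hi; apply H; lia). now rewrite H by lia.
Qed.

Lemma Osum_update s F G j : (j < s)%nat -> (forall i, i <> j -> F i = G i) ->
  (Osum s F == Osum s G + (F j - G j))%O.
Proof.
  induction s as [|s IH]; intros Hj H; [lia|]. cbn [Osum].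
  destruct (Nat.eq_dec j s) as [->|Hne].
  - rewrite (Osum_ext s F G) by (intros i Hi; apply H; lia). ring.
  - rewrite (IH ltac:(lia) H), (H s) by lia. ring.
Qed.

Fixpoint supp (L : list (nat * Oseq)) (i : nat) : Oseq :=
  match L with
  | [] => Ozero
  | (j, X) :: L' => if Nat.eqb i j then X else supp L' i
  end.

Lemma supp_notin L i : ~ In i (map fst L) -> supp L i = Ozero.
Proof.
  induction L as [|[j X] L IH]; cbn; [reflexivity|]. intros Hi.
  destruct (Nat.eqb_spec i j) as [->|_]; [now destruct Hi; left|]. apply IH. tauto.
Qed.

Lemma supp_head j X L : supp ((j, X) :: L) j = X.
Proof. cbn. now rewrite Nat.eqb_refl. Qed.

Lemma isO_supp L i : Forall (fun p => isO (snd p)) L -> isO (supp L i).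
Proof.
  induction L as [|[j X] L IH]; intros H; cbn; [apply isO_cst|].
  inversion H; subst. destruct (Nat.eqb i j); auto.
Qed.

Lemma Osum_zero s F : (forall i, (F i == Ozero)%O) -> (Osum s F == Ozero)%O.
Proof.
  intros H. induction s as [|s IH]; cbn [Osum]; [reflexivity|]. rewrite IH, H. ring.
Qed.

Lemma diag_form_supp d s a L : (1 <= d)%nat -> NoDup (map fst L) ->
  Forall (fun p => fst p < s)%nat L ->
  (diag_form K d s a (supp L) == fold_right (fun p acc => a (fst p) * snd p ^ d + acc) Ozero L)%O.
Proof.
  intros Hd. induction L as [|[j X] L IH]; intros Hnd Hs; cbn [fold_right fst snd].
  - apply Osum_zero. intros i. cbn [supp]. rewrite Opow_zero by exact Hd. ring.
  - inversion Hnd as [|? ? Hj Hnd']; subst. inversion Hs as [|? ? Hjs Hs']; subst.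
    unfold diag_form.
    rewrite (Osum_update s _ (fun i => a i * supp L i ^ d)%O j Hjs).
    + fold (diag_form K d s a (supp L)). rewrite IH by assumption.
      rewrite supp_head, (supp_notin L j Hj), Opow_zero by exact Hd. ring.
    + intros i Hi. cbn [supp]. now rewrite (proj2 (Nat.eqb_neq i j) Hi).
Qed.

Lemma supp_In L j X : NoDup (map fst L) -> In (j, X) L -> supp L j = X.
Proof.
  induction L as [|[i Y] L IH]; cbn; [tauto|]. intros Hnd [E|Hin]; inversion Hnd; subst.
  - injection E as -> ->. now rewrite Nat.eqb_refl.
  - destruct (Nat.eqb_spec j i) as [->|_]; [|now apply IH].
    exfalso. apply (in_map fst) in Hin. contradiction.
Qed.

Lemma pi_coef_dvd_sub u1 u2 c :
  pi_coef K u1 c -> pi_coef K u2 c -> Odvd K (Opi K ^ 2)%O (u2 - u1)%O.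
Proof.
  intros [z1 [Hz1 E1]] [z2 [Hz2 E2]]. exists (z2 - z1)%O. split; [now apply isO_sub|].
  transitivity (Opi K ^ 2 * z2 - Opi K ^ 2 * z1)%O; [ring|]. rewrite E1, E2. ring.
Qed.

Lemma mod_add_neq a j d : (0 < j < d)%nat -> Nat.modulo a d <> Nat.modulo (a + j) d.
Proof.
  intros Hj He.
  pose proof (Nat.div_mod a d ltac:(lia)) as E1.
  pose proof (Nat.div_mod (a + j) d ltac:(lia)) as E2.
  rewrite <- He in E2. set (q1 := (a / d)%nat) in *. set (q2 := ((a + j) / d)%nat) in *.
  destruct (Nat.le_gt_cases q2 q1).
  - assert (d * q2 <= d * q1)%nat by (apply Nat.mul_le_mono_l; auto). lia.
  - assert (d * (q1 + 1) <= d * q2)%nat by (apply Nat.mul_le_mono_l; lia). lia.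
Qed.

Lemma common_exponent r lev d M :
  (0 < d)%nat -> Nat.modulo r d = Nat.modulo lev d -> (r <= M)%nat ->
  exists t, (r + d * t = lev + d * M)%nat.
Proof.
  intros Hd Hm HM.
  pose proof (Nat.div_mod r d ltac:(lia)) as E1. pose proof (Nat.div_mod lev d ltac:(lia)) as E2.
  assert (Hq : (r / d <= M)%nat)
    by (apply Nat.le_trans with r; auto; apply Nat.Div0.div_le_upper_bound; nia).
  exists (lev / d + (M - r / d))%nat.
  assert (d * (r / d) <= d * M)%nat by (apply Nat.mul_le_mono_l; auto).
  rewrite Nat.mul_add_distr_l, Nat.mul_sub_distr_l. lia.
Qed.

Lemma diag_form_zero_of_levels m s a k l c i1 i2 j1 j2 p :
  Nat.odd m = true -> (2 <= l <= 4)%nat ->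
  NoDup [i1; i2; j1; j2; p] -> Forall (fun i => i < s)%nat [i1; i2; j1; j2; p] ->
  level_coef K (2 * m) (a i1) k c -> level_coef K (2 * m) (a i2) k c ->
  at_level K (2 * m) (a j1) (k + 1) -> at_level K (2 * m) (a j2) (k + 1) ->
  at_level K (2 * m) (a p) (k + l) ->
  exists x : nat -> Oseq,
    (forall i, (i < s)%nat -> isO (x i)) /\ (exists i, (i < s)%nat /\ ~ Oeq (x i) Ozero) /\
    Oeq (diag_form K (2 * m) s a x) Ozero.
Proof.
  intros Hm Hl Hnd Hs (r1 & u1 & Hu1 & Uu1 & E1 & M1 & P1) (r2 & u2 & Hu2 & Uu2 & E2 & M2 & P2)
    (c3 & r3 & u3 & Hu3 & Uu3 & E3 & M3 & _) (c4 & r4 & u4 & Hu4 & Uu4 & E4 & M4 & _)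
    (c5 & r5 & u5 & Hu5 & Uu5 & E5 & M5 & _).
  assert (Hd : (0 < 2 * m)%nat) by (destruct m; [discriminate|lia]).
  set (M := (r1 + r2 + r3 + r4 + r5)%nat).
  destruct (common_exponent r1 k _ M Hd M1 ltac:(lia)) as [t1 T1].
  destruct (common_exponent r2 k _ M Hd M2 ltac:(lia)) as [t2 T2].
  destruct (common_exponent r3 (k + 1) _ M Hd M3 ltac:(lia)) as [t3 T3].
  destruct (common_exponent r4 (k + 1) _ M Hd M4 ltac:(lia)) as [t4 T4].
  destruct (common_exponent r5 (k + l) _ M Hd M5 ltac:(lia)) as [t5 T5].
  destruct (normal_form_root m l u1 u2 u3 u4 u5 Hm Hl (conj Hu1 Uu1) (conj Hu2 Uu2) (conj Hu3 Uu3)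
              (conj Hu4 Uu4) (conj Hu5 Uu5) (pi_coef_dvd_sub u1 u2 c P1 P2))
    as (Y1 & Y2 & Y3 & Y4 & Y5 & HY1 & HY2 & HY3 & HY4 & HY5 & Hodd & HY).
  set (L := [(i1, Opi K ^ t1 * Y1); (i2, Opi K ^ t2 * Y2); (j1, Opi K ^ t3 * Y3);
             (j2, Opi K ^ t4 * Y4); (p, Opi K ^ t5 * Y5)]%O).
  exists (supp L). split; [|split].
  - intros i _. apply isO_supp.
    repeat constructor; cbn [snd]; auto 10 with isO.
  - rewrite Forall_forall in Hs.
    destruct Hodd as [Hodd|Hodd]; [exists i1|exists j1]; (split; [apply Hs; cbn; tauto|]).
    + rewrite (supp_In L i1 (Opi K ^ t1 * Y1)%O Hnd) by (cbn; tauto).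
      now apply Opi_pow_mul_nonzero.
    + rewrite (supp_In L j1 (Opi K ^ t3 * Y3)%O Hnd) by (cbn; tauto).
      now apply Opi_pow_mul_nonzero.
  - rewrite diag_form_supp;
      [|lia|exact Hnd|exact (proj1 (Forall_map fst (fun i => i < s)%nat L) Hs)].
    unfold L. cbn [fold_right fst snd].
    rewrite (monomial_shift _ _ _ _ _ _ _ E1 T1), (monomial_shift _ _ _ _ _ _ _ E2 T2),
      (monomial_shift _ _ _ _ _ _ _ E3 T3), (monomial_shift _ _ _ _ _ _ _ E4 T4),
      (monomial_shift _ _ _ _ _ _ _ E5 T5), !Opow_add.
    transitivity
      (Opi K ^ k * Opi K ^ (2 * m * M) * normal_form m l u1 u2 u3 u4 u5 Y1 Y2 Y3 Y4 Y5)%O.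
    + unfold normal_form. cbn [Opow]. ring.
    + rewrite HY. ring.
Qed.

Lemma index_neq_of_levels d (a : nat -> Oseq) i j lv lv' :
  at_level K d (a i) lv -> at_level K d (a j) lv' -> Nat.modulo lv d <> Nat.modulo lv' d -> i <> j.
Proof. intros Hi Hj Hne ->. exact (Hne (at_level_mod d (a j) lv lv' Hi Hj)). Qed.

Lemma NoDup_of_levels d (a : nat -> Oseq) k l i1 i2 j1 j2 p :
  (2 <= l < d)%nat -> i1 <> i2 -> j1 <> j2 ->
  at_level K d (a i1) k -> at_level K d (a i2) k ->
  at_level K d (a j1) (k + 1) -> at_level K d (a j2) (k + 1) -> at_level K d (a p) (k + l) ->
  NoDup [i1; i2; j1; j2; p].
Proof.
  intros Hl D12 D34 A1 A2 A3 A4 A5.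
  assert (N01 : Nat.modulo k d <> Nat.modulo (k + 1) d) by (apply mod_add_neq; lia).
  assert (N0l : Nat.modulo k d <> Nat.modulo (k + l) d) by (apply mod_add_neq; lia).
  assert (N1l : Nat.modulo (k + 1) d <> Nat.modulo (k + l) d)
    by (replace (k + l)%nat with (k + 1 + (l - 1))%nat by lia; apply mod_add_neq; lia).
  pose proof (index_neq_of_levels d a _ _ _ _ A1 A3 N01).
  pose proof (index_neq_of_levels d a _ _ _ _ A1 A4 N01).
  pose proof (index_neq_of_levels d a _ _ _ _ A1 A5 N0l).
  pose proof (index_neq_of_levels d a _ _ _ _ A2 A3 N01).
  pose proof (index_neq_of_levels d a _ _ _ _ A2 A4 N01).
  pose proof (index_neq_of_levels d a _ _ _ _ A2 A5 N0l).
  pose proof (index_neq_of_levels d a _ _ _ _ A3 A5 N1l).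
  pose proof (index_neq_of_levels d a _ _ _ _ A4 A5 N1l).
  repeat constructor; cbn; intuition congruence.
Qed.

End Lemma16.

Lemma reps_cover_holds K : reps_cover K = true.
Proof. destruct K; vm_cast_no_check (eq_refl true). Qed.

Lemma local_check_holds K : local_check K = true.
Proof. destruct K; vm_cast_no_check (eq_refl true). Qed.

Theorem lemma16 (K : ramQ2) (m : nat) (s : nat) (a : nat -> Oseq) (k : nat) :
  Nat.odd m = true -> (3 <= m)%nat ->
  (forall i, (i < s)%nat -> isO (a i) /\ ~ Oeq (a i) Ozero) ->
  (exists i j c, (i < s)%nat /\ (j < s)%nat /\ i <> j /\
     level_coef K (2 * m) (a i) k c /\ level_coef K (2 * m) (a j) k c) ->
  (exists i j, (i < s)%nat /\ (j < s)%nat /\ i <> j /\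
     at_level K (2 * m) (a i) (k + 1) /\ at_level K (2 * m) (a j) (k + 1)) ->
  (exists i l, (i < s)%nat /\ (2 <= l <= 4)%nat /\
     at_level K (2 * m) (a i) (k + l)) ->
  exists x : nat -> Oseq,
    (forall i, (i < s)%nat -> isO (x i)) /\
    (exists i, (i < s)%nat /\ ~ Oeq (x i) Ozero) /\
    Oeq (diag_form K (2 * m) s a x) Ozero.
Proof.
  (* Every other variable is set to 0, so the remaining coefficients play no role. *)
  intros Hm Hm3 _ (i1 & i2 & c & Hi1 & Hi2 & D12 & L1 & L2) (j1 & j2 & Hj1 & Hj2 & D34 & L3 & L4)
    (p & l & Hp & Hl & L5).
  apply (diag_form_zero_of_levels K (reps_cover_holds K) (local_check_holds K)
           m s a k l c i1 i2 j1 j2 p); auto.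
  - apply (NoDup_of_levels K (2 * m) a k l); auto; [lia|exists c; assumption..].
  - repeat constructor; assumption.
Qed.
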